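(* Let $G$ be a symmetric connected graph of order $n\ge 3$ and let $g:A\to B$ be any function. Then $1\leq fix(G)+fix(F_G)\leq 3n-4$. Both bounds are sharp.
   Context: All graphs are simple, finite, nontrivial and connected. A set $S\subseteq V(H)$ is a fixing set of a graph $H$ if the only automorphism of $H$ fixing every vertex of $S$ is the identity; $fix(H)$ is the minimum cardinality of a fixing set of $H$. A connected graph $G$ is symmetric if $fix(G)\neq 0$ (i.e. $G$ has a nontrivial automorphism). Functigraph: let $G_1,G_2$ be disjoint copies of a connected graph $G$, with $A=V(G_1)$, $B=V(G_2)$, and let $g:A\to B$ be a function. The functigraph $F_G$ has vertex set $A\cup B$ and edge set $E(G_1)\cup E(G_2)\cup\{ug(u):u\in A\}$. *)

From HB Require Import structures.
From mathcomp Require Import all_boot all_fingroup.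
Set Implicit Arguments. Unset Strict Implicit. Unset Printing Implicit Defensive.

Definition simple_graph (T : finType) (e : rel T) : Prop :=
  symmetric e /\ irreflexive e.

Definition connected_graph (T : finType) (e : rel T) : Prop :=
  forall x y : T, connect e x y.

Definition is_autb (T : finType) (e : rel T) (s : {perm T}) : bool :=
  [forall x, [forall y, e (s x) (s y) == e x y]].

Definition fixing_set (T : finType) (e : rel T) (S : {set T}) : bool :=
  [forall s : {perm T}, (is_autb e s && [forall x in S, s x == x]) ==> (s == 1%g)].

(* fix(e) = minimum cardinality of a fixing set (the full vertex set is always
   fixing, so the default #|T| is never smaller than the true minimum) *)
Definition fixnum (T : finType) (e : rel T) : nat :=
  \big[minn/#|T|]_(S : {set T} | fixing_set e S) #|S|.

(* Functigraph F_G: vertices inl x (copy A) and inr x (copy B). *)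
Definition functigraph (T : finType) (e : rel T) (g : T -> T) : rel (T + T) :=
  fun u v =>
    match u, v with
    | inl x, inl y => e x y
    | inr x, inr y => e x y
    | inl x, inr y => g x == y
    | inr y, inl x => g x == y
    end.

Definition symmetric_graph (T : finType) (e : rel T) : Prop := fixnum e <> 0.

From HB Require Import structures.
From mathcomp Require Import all_boot all_fingroup.
From mathcomp Require Import zify.
Set Implicit Arguments. Unset Strict Implicit. Unset Printing Implicit Defensive.

(* Lower bound: a symmetric G has fix(G) >= 1.  Upper bound: all vertices but one
   form a fixing set of G, so fix(G) <= n - 1; in F_G the vertices a, g(a) and a
   suitable c in B are pairwise separated (some vertex is adjacent to exactly one of
   the two), and the complement of three pairwise separated vertices is fixing, so
   fix(F_G) <= 2n - 3.
   Sharpness: the path P_n has fix = 1, and joining a_0 to b_1 and every other a_i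
   to b_0 makes F_G rigid: its only leaf b_(n-1) is fixed and fixed points
   propagate along both paths.  For K_n and a constant g, a fixing set omits at most
   one vertex of each class of twins (vertices with the same other neighbours),
   which forces fix(K_n) = n - 1 and fix(F_G) = 2n - 3. *)

Section FixingNumber.
Variables (T : finType) (e : rel T).

Lemma is_autP (s : {perm T}) :
  reflect (forall x y, e (s x) (s y) = e x y) (is_autb e s).
Proof.
apply: (iffP forallP) => [As x y | As x]; last by apply/forallP => y; rewrite As.
by move/forallP: (As x) => /(_ y) /eqP.
Qed.

Lemma fixing_setP (S : {set T}) :
  reflect (forall s : {perm T}, is_autb e s -> {in S, forall x, s x = x} -> s = 1%g)
          (fixing_set e S).
Proof.
apply: (iffP forallP) => [FS s As sS | FS s].
  by apply/eqP; move/implyP: (FS s); apply; rewrite As; apply/forall_inP => x /sS ->.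
by apply/implyP => /andP[As /forall_inP sS]; apply/eqP/FS => // x /sS/eqP.
Qed.

Lemma fixnum_le_card (S : {set T}) : fixing_set e S -> fixnum e <= #|S|.
Proof.
move=> FS; rewrite /fixnum; have : S \in index_enum _ by rewrite mem_index_enum.
elim: (index_enum _) => // R r IHr; rewrite inE big_cons.
case/predU1P => [<-|/IHr le_S]; first by rewrite FS geq_minl.
by case: ifP => _ //; rewrite geq_min le_S orbT.
Qed.

Lemma leq_fixnum k :
  k <= #|T| -> (forall S, fixing_set e S -> k <= #|S|) -> k <= fixnum e.
Proof.
move=> leT leS; apply: (big_ind (leq k)) => // m1 m2 le1 le2.
by rewrite leq_min le1 le2.
Qed.

Lemma fixing_setC1 (t : T) : fixing_set e [set~ t].
Proof.
apply/fixing_setP => s _ sS.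
have st : s t = t.
  apply/eqP/negPn/negP => stt; have := sS (s t); rewrite !inE stt => /(_ isT).
  by move/perm_inj/eqP; rewrite (negbTE stt).
by apply/permP => x; rewrite perm1; case: (eqVneq x t) => [->|xt]; last rewrite sS ?inE.
Qed.

Lemma fixnum_le_pred_card (t : T) : fixnum e <= #|T| - 1.
Proof. by rewrite subn1 -(cardsC1 t); apply/fixnum_le_card/fixing_setC1. Qed.

Definition deg (v : T) := #|[set w | e v w]|.

Lemma deg_aut (s : {perm T}) v : is_autb e s -> deg (s v) = deg v.
Proof.
move=> As; rewrite /deg -(card_preimset _ (@perm_inj _ s)).
by apply: eq_card => w; rewrite !inE (is_autP _ As).
Qed.

Lemma deg_ge_card (W : {set T}) v : {in W, forall w, e v w} -> #|W| <= deg v.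
Proof. by move=> vW; apply/subset_leq_card/subsetP => w /vW; rewrite inE. Qed.

Lemma deg_ge2 v w1 w2 : e v w1 -> e v w2 -> w1 != w2 -> 1 < deg v.
Proof.
move=> vw1 vw2 w12; have := @deg_ge_card [set w1; w2] v; rewrite cards2 w12.
by apply=> w /set2P[]->.
Qed.

(* s permutes the neighbours of a fixed vertex u, preserving degrees. *)
Lemma aut_fix_neighbor (s : {perm T}) u v :
  is_autb e s -> s u = u -> e u v ->
  (forall w, e u w -> [\/ w = v, s w = w | deg w != deg v]) -> s v = v.
Proof.
move=> As su uv Nu; have : e u (s v) by rewrite -{1}su (is_autP _ As).
by case/Nu => [// | /perm_inj // | ]; rewrite deg_aut ?eqxx.
Qed.

Lemma aut_fix_chain (s : {perm T}) (f : nat -> T) k :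
  is_autb e s -> s (f 0) = f 0 -> (forall i, i < k -> e (f i) (f i.+1)) ->
  (forall i w, i < k -> e (f i) w -> [\/ w = f i.+1, w = f i.-1 | s w = w]) ->
  forall i, i <= k -> s (f i) = f i.
Proof.
move=> As s0 fE fN i le_ik.
suff fix_upto : forall j, j <= i -> s (f j) = f j by exact: fix_upto.
elim: i le_ik => [_ j|i IHi lt_ik j]; first by rewrite leqn0 => /eqP ->.
have {}IHi := IHi (ltnW lt_ik).
rewrite leq_eqVlt => /predU1P[->|]; last exact: IHi.
apply: (aut_fix_neighbor As (IHi i (leqnn i)) (fE i lt_ik)).
move=> w /(fN i w lt_ik)[|->|]; [by constructor 1 | | by constructor 2].
by constructor 2; apply: IHi (leq_pred i).
Qed.

Lemma connected_neighbor :
  irreflexive e -> connected_graph e -> 1 < #|T| -> forall x, exists y, e x y.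
Proof.
move=> e_irr e_conn /card_gt1P[x0 [y0 [_ _ x0y0]]] x.
have [y yx] : exists y, y != x.
  by case: (eqVneq x0 x) => [<-|]; [exists y0; rewrite eq_sym | exists x0].
case/connectP: (e_conn x y) => [[|z p]] /=; first by move=> _ yE; rewrite yE eqxx in yx.
by case/andP => xz _ _; exists z.
Qed.

Lemma set3P (x u v w : T) : reflect [\/ x = u, x = v | x = w] (x \in [set u; v; w]).
Proof.
rewrite !inE -orbA; apply: (iffP or3P) => -[] /eqP xu; by [constructor 1|constructor 2|constructor 3].
Qed.

Section Twins.
Hypotheses (e_sym : symmetric e) (e_irr : irreflexive e).

Definition twins (u v : T) := forall w, w != u -> w != v -> e w u = e w v.

Lemma twins_aut u v : twins u v -> is_autb e (tperm u v).
Proof.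
move=> tw; have tw' w : w != u -> w != v -> e u w = e v w.
  by move=> wu wv; rewrite e_sym (e_sym v) tw.
apply/is_autP => x y.
case: tpermP => [->|->|/eqP xu /eqP xv]; case: tpermP => [->|->|/eqP yu /eqP yv];
  rewrite ?e_irr ?(e_sym v u) //.
all: first [by rewrite tw' | by rewrite tw | by rewrite -tw' | by rewrite -tw].
Qed.

Lemma fixing_set_twins S u v :
  fixing_set e S -> u != v -> twins u v -> (u \in S) || (v \in S).
Proof.
move=> /fixing_setP FS uv tw; apply/negPn/negP; rewrite negb_or => /andP[uS vS].
have /(congr1 (fun s : {perm T} => s u)) : tperm u v = 1%g.
  apply: FS (twins_aut tw) _ => x xS.
  by apply: tpermD; apply: contraTneq xS => <-.
by rewrite tpermL perm1 => /eqP; rewrite eq_sym (negbTE uv).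
Qed.

(* A fixing set contains all but at most one vertex of each twin class. *)
Lemma fixnum_ge_twin_classes k (c : T -> 'I_k) :
  (forall u v, u != v -> c u = c v -> twins u v) -> #|T| - k <= fixnum e.
Proof.
move=> c_tw; apply: leq_fixnum => [|S FS]; first exact: leq_subr.
have c_inj : {in ~: S &, injective c}.
  move=> u v; rewrite !inE => uS vS cuv; apply/eqP/negPn/negP => uv.
  by move: (fixing_set_twins FS uv (c_tw u v uv cuv)); rewrite (negbTE uS) (negbTE vS).
have : #|c @: ~: S| <= k by apply: leq_trans (max_card _) _; rewrite card_ord.
by rewrite (card_in_imset c_inj) cardsCs setCK leq_subCl.
Qed.

Definition separated (u v : T) := exists w, [/\ w != u, w != v & e w u != e w v].

Lemma separatedC u v : separated u v -> separated v u.
Proof. by case=> w [wu wv uv]; exists w; rewrite wu wv eq_sym. Qed.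

(* If s moves u, a vertex w separating u from s u is moved too, so s cycles
   A = {u, s u, w}; symmetry of e then gives e w u = e w (s u). *)
Lemma fixing_setC_separated (A : {set T}) :
  #|A| <= 3 -> {in A &, forall u v, u != v -> separated u v} -> fixing_set e (~: A).
Proof.
move=> A3 sepA; apply/fixing_setP => s As sA.
have onA : perm_on A s.
  by apply/subsetP => x; rewrite inE; apply: contraR => xA; rewrite sA ?inE.
apply/permP => u; rewrite perm1; apply/eqP/negPn/negP => suu.
have uA : u \in A by apply: (subsetP onA); rewrite inE.
have vA : s u \in A by rewrite perm_closed.
have [w [wu wv sep]] : separated u (s u) by apply: sepA; rewrite // eq_sym.
have [sww|sww] := eqVneq (s w) w.
  by move: sep; rewrite -{2}sww (is_autP _ As) eqxx.
have wA : w \in A by apply: (subsetP onA); rewrite inE.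
have eqA : [set u; s u; w] = A.
  apply/eqP; rewrite eqEcard; apply/andP; split.
    by apply/subsetP => x /set3P[]->.
  rewrite (leq_trans A3) // setUC cardsU1 cards2 !inE negb_or.
  by rewrite wu wv eq_sym suu.
have swu : s w = u.
  move: (wA); rewrite -(perm_closed _ onA) -eqA => /set3P[// | /perm_inj wu' | sw].
    by rewrite wu' eqxx in wu.
  by rewrite sw eqxx in sww.
have ssuw : s (s u) = w.
  move: (vA); rewrite -(perm_closed _ onA) -eqA => /set3P[| /perm_inj suu' | //].
    by rewrite -{2}swu => /perm_inj suw; rewrite suw eqxx in wv.
  by rewrite suu' eqxx in suu.
by move: sep; rewrite -(is_autP _ As w) swu -(is_autP _ As u) ssuw e_sym eqxx.
Qed.

End Twins.
End FixingNumber.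

Section Functigraph.
Variables (T : finType) (e : rel T) (g : T -> T).
Local Notation F := (functigraph e g).

Lemma functigraph_sym : symmetric e -> symmetric F.
Proof. by move=> e_sym [x|x] [y|y] //=; rewrite e_sym. Qed.

Lemma functigraph_irr : irreflexive e -> irreflexive F.
Proof. by move=> e_irr [x|x] /=; rewrite e_irr. Qed.

(* Take a in A, b = g a, a neighbour r of a and c in B outside {b, g r}:
   a neighbour of b separates a from b, a separates b from c, r separates a from c. *)
Lemma fixnum_functigraph_le :
  simple_graph e -> connected_graph e -> 3 <= #|T| -> fixnum F <= 2 * #|T| - 3.
Proof.
case=> e_sym e_irr e_conn T3.
have [a _] : exists a, a \in T by apply/card_gt0P; rewrite (leq_trans _ T3).
have [r ar] := connected_neighbor e_irr e_conn (ltnW T3) a.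
have [q gaq] := connected_neighbor e_irr e_conn (ltnW T3) (g a).
have [c] : exists c, c \in ~: [set g a; g r].
  by apply/card_gt0P; rewrite cardsCs setCK cards2; case: (_ != _); lia.
rewrite !inE negb_or => /andP[gac grc].
have ra : r != a by apply: contraTneq ar => ->; rewrite e_irr.
have qga : q != g a by apply: contraTneq gaq => ->; rewrite e_irr.
have sep_ab : separated F (inl a) (inr (g a)).
  by exists (inr q); rewrite /= (inj_eq inr_inj) qga e_sym gaq (eq_sym (g a)) (negbTE qga).
have sep_bc : separated F (inr (g a)) (inr c).
  by exists (inl a); rewrite /= eqxx (eq_sym (g a)) (negbTE gac).
have sep_ac : separated F (inl a) (inr c).
  by exists (inl r); rewrite /= (inj_eq inl_inj) ra e_sym ar (eq_sym (g r)) (negbTE grc).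
have card3 : #|[set inl a; inr (g a); inr c]| = 3.
  by rewrite setUC cardsU1 cards2 !inE (inj_eq inr_inj) gac.
have : fixing_set F (~: [set inl a; inr (g a); inr c]).
  apply: fixing_setC_separated; rewrite ?card3 //; first exact: functigraph_sym.
  by move=> u v /set3P[]-> /set3P[]->; rewrite ?eqxx // => _; exact/separatedC.
by move/fixnum_le_card; rewrite cardsCs setCK card_sum card3; lia.
Qed.

Lemma fixnum_functigraph_bounds :
  simple_graph e -> connected_graph e -> symmetric_graph e -> 3 <= #|T| ->
  1 <= fixnum e + fixnum F <= 3 * #|T| - 4.
Proof.
move=> e_simple e_conn e_symm T3.
have [t _] : exists t, t \in T by apply/card_gt0P; rewrite (leq_trans _ T3).
have := fixnum_le_pred_card e t; have := fixnum_functigraph_le e_simple e_conn T3.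
by move: e_symm; rewrite /symmetric_graph; lia.
Qed.
End Functigraph.

Section CompleteGraph.
Variable T : finType.

Definition complete_graph : rel T := fun x y => x != y.

Lemma complete_graph_simple : simple_graph complete_graph.
Proof. by split => [x y|x]; rewrite /complete_graph ?eqxx // eq_sym. Qed.

Lemma complete_graph_connected : connected_graph complete_graph.
Proof. by move=> x y; case: (eqVneq x y) => [->|xy]; [exact: connect0 | exact: connect1]. Qed.

Lemma fixnum_complete_graph_ge : #|T| - 1 <= fixnum complete_graph.
Proof.
have [e_sym e_irr] := complete_graph_simple.
apply: (fixnum_ge_twin_classes e_sym e_irr (c := fun=> @ord0 0)) => u v _ _ w wu wv.
by rewrite /complete_graph wu wv.
Qed.

Lemma complete_graph_symmetric : 2 <= #|T| -> symmetric_graph complete_graph.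
Proof. by move=> T2; have := fixnum_complete_graph_ge; rewrite /symmetric_graph; lia. Qed.

Variable t0 : T.
Local Notation F := (functigraph complete_graph (fun=> t0)).

(* The twin classes of F are A, {inr t0} and the rest of B. *)
Definition complete_functigraph_class (x : T + T) : 'I_3 :=
  match x with
  | inl _ => @Ordinal 3 0 isT
  | inr y => if y == t0 then @Ordinal 3 1 isT else @Ordinal 3 2 isT
  end.

Lemma fixnum_complete_functigraph_ge : 2 * #|T| - 3 <= fixnum F.
Proof.
have [e_sym e_irr] := complete_graph_simple.
have := fixnum_ge_twin_classes (functigraph_sym _ e_sym) (functigraph_irr _ e_irr)
  (c := complete_functigraph_class).
rewrite card_sum; have -> : #|T| + #|T| - 3 = 2 * #|T| - 3 by lia.
apply=> -[p|p] [q|q] //= pq /(congr1 val) /=; try by case: ifP.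
  move=> _ [r|r] //=; rewrite (inj_eq inl_inj) /complete_graph => rp rq.
  by rewrite rp rq.
have [->|pt0] := eqVneq p t0; have [->|qt0] := eqVneq q t0; rewrite ?eqxx //=.
move=> _ [r|r] //=; last by rewrite (inj_eq inr_inj) /complete_graph => -> ->.
by rewrite (eq_sym t0) (negbTE pt0) (eq_sym t0) (negbTE qt0).
Qed.

Lemma fixnum_complete_functigraph_sum :
  3 <= #|T| -> fixnum complete_graph + fixnum F = 3 * #|T| - 4.
Proof.
move=> T3; have := fixnum_functigraph_bounds (fun=> t0) complete_graph_simple
  complete_graph_connected (complete_graph_symmetric (ltnW T3)) T3.
by have := fixnum_complete_graph_ge; have := fixnum_complete_functigraph_ge; lia.
Qed.
End CompleteGraph.

Definition path_graph (n : nat) : rel 'I_n := fun x y => (x.+1 == y) || (y.+1 == x).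
Arguments path_graph : clear implicits.

Lemma path_graph_simple (n : nat) : simple_graph (path_graph n).
Proof. by split => [x y|x]; rewrite /path_graph ?(gtn_eqF (ltnSn x)) // orbC. Qed.

Lemma path_graph_connected (n : nat) : connected_graph (path_graph n).
Proof.
have reach k (x y : 'I_n) : y = x + k :> nat -> connect (path_graph n) x y.
  elim: k y => [|k IHk] y yE.
    by rewrite (val_inj (etrans yE (addn0 _))) connect0.
  have lt_xk : x + k < n by have := ltn_ord y; lia.
  apply: connect_trans (IHk (Ordinal lt_xk) erefl) (connect1 _).
  by rewrite /path_graph /= yE addnS eqxx.
move=> x y; case: (leqP x y) => [le_xy | lt_yx].
  by apply: (reach (y - x)); rewrite subnKC.
rewrite (sym_connect_sym (path_graph_simple n).1).
by apply: (reach (x - y)); rewrite subnKC // ltnW.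
Qed.

Definition path_reversal (n : nat) : {perm 'I_n} := perm (@rev_ord_inj n).

Lemma path_reversal_aut (n : nat) : is_autb (path_graph n) (path_reversal n).
Proof.
apply/is_autP => x y; rewrite !permE /path_graph /=.
have := ltn_ord x; have := ltn_ord y; move: (val x) (val y) => a b ha hb.
by apply/orP/orP => -[] /eqP ab; [right|left|right|left]; apply/eqP; lia.
Qed.

Lemma inord_eq n (x : 'I_n.+1) i : x = i :> nat -> x = inord i.
Proof. by move <-; rewrite inord_val. Qed.

Lemma path_graph_nbr n (i : nat) (w : 'I_n.+1) :
  path_graph n.+1 (inord i) w -> i <= n -> w = inord i.+1 \/ w = inord i.-1.
Proof.
move=> iw le_in; move: iw; rewrite /path_graph inordK // => /orP[] /eqP wE.
  by left; apply: ord_inj; rewrite inordK ?wE.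
by right; apply: ord_inj; rewrite inordK -?wE //; lia.
Qed.

Lemma path_graph_rigid n (s : {perm 'I_n.+1}) :
  is_autb (path_graph n.+1) s -> s ord0 = ord0 -> s = 1%g.
Proof.
move=> As s0; apply/permP => x; rewrite perm1 -(inord_val x).
apply: (aut_fix_chain (f := inord) (k := n) As); last by rewrite -ltnS.
- by rewrite (_ : inord 0 = ord0) //; apply: ord_inj; rewrite inordK.
- by move=> i lt_in; rewrite /path_graph !inordK ?eqxx // ltnW.
- move=> i w lt_in /path_graph_nbr /(_ (ltnW lt_in))[]; by [constructor 1 | constructor 2].
Qed.

Lemma fixnum_path_graph n : fixnum (path_graph n.+2) = 1.
Proof.
apply/eqP; rewrite eqn_leq; apply/andP; split.
  rewrite -(cards1 (@ord0 n.+1)); apply/fixnum_le_card/fixing_setP => s As s0.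
  by apply: path_graph_rigid => //; apply: s0; rewrite inE.
apply: leq_fixnum => [|S /fixing_setP FS]; first by rewrite card_ord.
rewrite card_gt0; apply/eqP => S0.
have rev1 : path_reversal n.+2 = 1%g by apply: FS (path_reversal_aut _) _ => x; rewrite S0 inE.
by move/(congr1 (fun s : {perm 'I_n.+2} => val (s ord0))): rev1; rewrite permE perm1.
Qed.

Section HookedPath.
Variable m : nat.

Definition hook (x : 'I_m.+3) : 'I_m.+3 := if x == ord0 then inord 1 else ord0.

Local Notation F := (functigraph (path_graph m.+3) hook).
Local Notation a i := (@inl 'I_m.+3 'I_m.+3 (inord i)).
Local Notation b i := (@inr 'I_m.+3 'I_m.+3 (inord i)).

Lemma hook_val x : hook x = (x == ord0) :> nat.
Proof. by rewrite /hook; case: eqP; rewrite ?inordK. Qed.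

Lemma hook_inord i : i < m.+3 -> hook (inord i) = (i == 0) :> nat.
Proof. by move=> lt_i; rewrite hook_val -val_eqE /= inordK. Qed.

Lemma deg_hook_leaf : deg F (b m.+2) <= 1.
Proof.
rewrite -(cards1 (b m.+1)); apply/subset_leq_card/subsetP => -[x|y]; rewrite !inE /=.
  by move/eqP/(congr1 val); rewrite /= hook_val inordK //; case: (x == ord0).
rewrite /path_graph inordK // => /orP[] /eqP yE; first by have := ltn_ord y; lia.
by rewrite (inj_eq inr_inj) (inord_eq (_ : y = m.+1 :> nat)) //; lia.
Qed.

Lemma deg_hook_ge2 v : v != b m.+2 -> 1 < deg F v.
Proof.
case: v => [x|y] yN.
  have [_ pg_irr] := path_graph_simple m.+3.
  have [|y xy] := connected_neighbor pg_irr (@path_graph_connected _) _ x.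
    by rewrite card_ord.
  by apply: (@deg_ge2 _ _ _ (inl y) (inr (hook x))) => /=.
have y_last : y < m.+2.
  by rewrite ltn_neqAle -ltnS ltn_ord andbT; apply: contraNneq yN => /inord_eq ->.
have y1 : y.+1 < m.+3 by [].
have [y0|y_pos] := posnP y.
  apply: (@deg_ge2 _ _ _ (inr (Ordinal y1)) (a 1)) => //=.
    by rewrite /path_graph /= eqxx.
  by rewrite -val_eqE /= hook_inord ?y0.
have y_1 : y.-1 < m.+3 by rewrite (leq_ltn_trans (leq_pred y)).
apply: (@deg_ge2 _ _ _ (inr (Ordinal y1)) (inr (Ordinal y_1))) => /=.
- by rewrite /path_graph /= eqxx.
- by rewrite /path_graph /= prednK ?eqxx ?orbT.
- by rewrite (inj_eq inr_inj) -val_eqE /=; lia.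
Qed.

Variable s : {perm 'I_m.+3 + 'I_m.+3}.
Hypothesis As : is_autb F s.

Lemma hook_fix_leaf : s (b m.+2) = b m.+2.
Proof.
apply/eqP; apply: contraT => /deg_hook_ge2; rewrite deg_aut //.
by have := deg_hook_leaf; lia.
Qed.

Lemma hook_fix_inr_pos j : 0 < j -> j <= m.+2 -> s (b j) = b j.
Proof.
move=> j_pos le_j; rewrite -(subKn le_j).
apply: (aut_fix_chain (f := fun i => b (m.+2 - i)) (k := m.+1) As); last by lia.
- by rewrite subn0 hook_fix_leaf.
- by move=> i lt_i; rewrite /= /path_graph !inordK ?eqxx ?orbT //; lia.
move=> i [x|y] lt_i /=.
  by move/eqP/(congr1 val); rewrite /= hook_val inordK //; case: (x == ord0); lia.
rewrite /path_graph inordK; last by lia.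
move: (ltn_ord y) => lt_y /orP[] /eqP yE; [constructor 2 | constructor 1].
  by rewrite (@inord_eq _ y (m.+2 - i.-1)) //; lia.
by rewrite (@inord_eq _ y (m.+2 - i.+1)) //; lia.
Qed.

Lemma deg_hook_a0 : deg F (a 0) <= 2.
Proof.
have <- : #|[set a 1; b 1]| = 2 by rewrite cards2.
apply/subset_leq_card/subsetP => -[x|y]; rewrite !inE /=.
  rewrite /path_graph inordK // => /orP[] /eqP xE; last by lia.
  by rewrite (inord_eq (esym xE)) eqxx.
by move/eqP <-; rewrite (inj_eq inr_inj) -val_eqE /= hook_inord ?inordK ?orbT.
Qed.

Lemma deg_hook_b0 : 2 < deg F (b 0).
Proof.
have <- : #|[set b 1; a 1; a 2]| = 3.
  by rewrite setUC cardsU1 cards2 !inE /= (inj_eq inl_inj) -val_eqE /= !inordK.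
apply: deg_ge_card => w /set3P[]-> /=.
- by rewrite /path_graph !inordK.
- by apply/eqP/ord_inj; rewrite hook_inord ?inordK.
- by apply/eqP/ord_inj; rewrite hook_inord ?inordK.
Qed.

(* The neighbours of b_1 are b_0, b_2 and a_0, and a_0, b_0 have different degrees. *)
Lemma hook_fix_inr0_inl0 : s (b 0) = b 0 /\ s (a 0) = a 0.
Proof.
have b1_nbr w : F (b 1) w -> [\/ w = b 0, w = b 2 | w = a 0].
  case: w => [x|y] /=.
    move/eqP/(congr1 val); rewrite /= hook_val inordK //.
    case: (eqVneq x ord0) => [-> _|//]; constructor 3; congr inl.
    by apply: ord_inj; rewrite inordK.
  rewrite /path_graph inordK // => /orP[] /eqP yE; [constructor 2 | constructor 1].
    by rewrite (inord_eq (esym yE)).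
  by rewrite (@inord_eq _ y 0) //; lia.
have fix_b1 := hook_fix_inr_pos (isT : 0 < 1) (isT : 1 <= m.+2).
have fix_b2 := hook_fix_inr_pos (isT : 0 < 2) (isT : 2 <= m.+2).
have b1_a0 : F (b 1) (a 0) by rewrite /= -val_eqE /= hook_inord ?inordK.
have b1_b0 : F (b 1) (b 0) by rewrite /= /path_graph !inordK.
have fix_a0 : s (a 0) = a 0.
  apply: (aut_fix_neighbor As fix_b1 b1_a0) => w /b1_nbr[]->;
    [constructor 3 | constructor 2 | constructor 1] => //.
  by have := deg_hook_b0; have := deg_hook_a0; lia.
split=> //; apply: (aut_fix_neighbor As fix_b1 b1_b0) => w /b1_nbr[]->;
  by [constructor 1 | constructor 2].
Qed.

Lemma hook_fix_inr y : s (inr y) = inr y.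
Proof.
rewrite -(inord_val y); have [->|y_pos] := posnP y; first exact: hook_fix_inr0_inl0.1.
by apply: hook_fix_inr_pos; rewrite // -ltnS.
Qed.

Lemma hook_rigid : s = 1%g.
Proof.
apply/permP => -[x|y]; rewrite perm1 ?hook_fix_inr // -(inord_val x).
apply: (aut_fix_chain (f := fun i => a i) (k := m.+2) As); last by rewrite -ltnS.
- exact: hook_fix_inr0_inl0.2.
- by move=> i lt_i; rewrite /= /path_graph !inordK ?eqxx // ltnW.
move=> i [w|w] lt_i /=; last by rewrite hook_fix_inr; constructor 3.
by move/path_graph_nbr/(_ (ltnW lt_i))=> [|] ->; [constructor 1 | constructor 2].
Qed.

End HookedPath.

Lemma fixnum_hooked_path m : fixnum (functigraph (path_graph m.+3) (@hook m)) = 0.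
Proof.
apply/eqP; rewrite -leqn0 -(@cards0 ('I_m.+3 + 'I_m.+3)%type).
by apply/fixnum_le_card/fixing_setP => s As _; apply: hook_rigid.
Qed.

Theorem mainTheorem2 :
  (forall (T : finType) (e : rel T) (g : T -> T),
      simple_graph e -> connected_graph e -> symmetric_graph e -> 3 <= #|T| ->
      1 <= fixnum e + fixnum (functigraph e g) <= 3 * #|T| - 4)
  /\
  (forall n : nat, 3 <= n ->
     (exists (T : finType) (e : rel T) (g : T -> T),
        [/\ #|T| = n, simple_graph e, connected_graph e, symmetric_graph e
          & fixnum e + fixnum (functigraph e g) = 1])
     /\
     (exists (T : finType) (e : rel T) (g : T -> T),
        [/\ #|T| = n, simple_graph e, connected_graph e, symmetric_graph e
          & fixnum e + fixnum (functigraph e g) = 3 * n - 4])).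
Proof.
split=> [T e g|n n3]; first exact: fixnum_functigraph_bounds.
have -> : n = (n - 3).+3 by lia.
move: (n - 3) => m; split.
  exists 'I_m.+3, (path_graph m.+3), (@hook m); split.
  - exact: card_ord.
  - exact: path_graph_simple.
  - exact: path_graph_connected.
  - by rewrite /symmetric_graph fixnum_path_graph.
  - by rewrite fixnum_path_graph fixnum_hooked_path.
exists 'I_m.+3, (@complete_graph 'I_m.+3), (fun=> ord0); split.
- exact: card_ord.
- exact: complete_graph_simple.
- exact: complete_graph_connected.
- by apply: complete_graph_symmetric; rewrite card_ord.
- by rewrite fixnum_complete_functigraph_sum ?card_ord.
Qed.
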